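(* Fix $n \ge 1$ and finite sets $\mathsf{AP}^I_L$, $\mathsf{AP}^O$, and let $\mathcal{I} = 2^{\mathsf{AP}^I_L \times \{0,\dots,n-1\}}$ and $\mathcal{O} = 2^{\mathsf{AP}^O \times \{0,\dots,n-1\}}$. A computation tree $\langle \mathcal{I}^*, \tau\rangle$ with $\tau : \mathcal{I}^* \to \mathcal{O}$ is regular and has the symmetry property if and only if it is the computation tree induced by the rotation-symmetric architecture with $n$ processes for some finite-state process implementation (Moore machine) $\mathcal{M}$ with input alphabet $\mathcal{I}$ and output alphabet $2^{\mathsf{AP}^O}$.
   Context: All indices are taken modulo $n$, where the modulo function always returns a value in $\{0,\dots,n-1\}$. For a set $\mathsf{AP}$, $U = 2^{\mathsf{AP}\times\{0,\dots,n-1\}}$ and $k \in \mathbb{Z}$, define $\mathrm{rot}(u,k) = \{(p,(j+k) \bmod n) \mid (p,j) \in u\}$ for $u \in U$; $\mathrm{rot}$ is extended letterwise to finite and infinite words over $U$. A computation tree is a map $\tau : \mathcal{I}^* \to \mathcal{O}$ (the label $\tau(t)$ is the output after reading the input sequence $t$). For $\hat t \in \mathcal{I}^*$, the subtree at $\hat t$ is the tree $t \mapsto \tau(\hat t t)$; the tree is regular if it has only finitely many distinct subtrees. The tree has the symmetry property if $\tau(\mathrm{rot}(t,i)) = \mathrm{rot}(\tau(t),i)$ for all $t \in \mathcal{I}^*$ and $0 \le i < n$. A Moore machine is $\mathcal{M} = (S,\mathcal{I},O,\delta,s_0,L)$ with finite state set $S$, transition function $\delta : S\times\mathcal{I}\to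 S$, initial state $s_0$ and labelling $L : S \to O$, where $O = 2^{\mathsf{AP}^O}$. The rotation-symmetric architecture with $n$ processes runs $n$ copies $p_0,\dots,p_{n-1}$ of $\mathcal{M}$ synchronously: the composed machine has states $S^n$, initial state $(s_0,\dots,s_0)$, transition $\delta'((s_0',\dots,s_{n-1}'),x) = (\delta(s_0',\mathrm{rot}(x,0)),\delta(s_1',\mathrm{rot}(x,-1)),\dots,\delta(s_{n-1}',\mathrm{rot}(x,-(n-1))))$ for $x \in \mathcal{I}$ (process $j$ sees the global input rotated by $-j$), and output $\bigcup_{j} L(s_j')\times\{j\} \in \mathcal{O}$ (the output proposition $o$ of process $j$ is the signal $(o,j)$). The induced computation tree maps $t \in \mathcal{I}^*$ to the output of the state of the composed machine reached after reading $t$ from the initial state. *)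

From HB Require Import structures.
From mathcomp Require Import all_boot all_order all_algebra.
Set Implicit Arguments. Unset Strict Implicit. Unset Printing Implicit Defensive.
Import GRing.Theory Num.Theory.

Definition rot (A : finType) (n : nat) (u : {set A * 'I_n}) (k : int)
  : {set A * 'I_n} :=
  [set x : A * 'I_n | [exists y in u,
     (x.1 == y.1) && (Posz (nat_of_ord x.2) == intdiv.modz (Posz (nat_of_ord y.2) + k)%R (Posz n))]].

Definition rotw (A : finType) (n : nat) (t : seq {set A * 'I_n}) (k : int) :=
  map (fun u => rot u k) t.

Definition subtree (I O : Type) (tau : seq I -> O) (th : seq I) : seq I -> O :=
  fun t => tau (th ++ t).

Definition regular_tree (I O : Type) (tau : seq I -> O) : Prop :=
  exists (m : nat) (f : 'I_m -> (seq I -> O)),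
    forall th : seq I, exists i : 'I_m, subtree tau th = f i.

Definition symmetric_tree (API APO : finType) (n : nat)
  (tau : seq {set API * 'I_n} -> {set APO * 'I_n}) : Prop :=
  forall (t : seq {set API * 'I_n}) (i : 'I_n),
    tau (rotw t (Posz (nat_of_ord i))) = rot (tau t) (Posz (nat_of_ord i)).

Record moore (I : Type) (APO : finType) := Moore {
  mstate : finType;
  mdelta : mstate -> I -> mstate;
  minit : mstate;
  mlab : mstate -> {set APO}
}.

Section Arch.
Variables (API APO : finType) (n : nat) (M : moore {set API * 'I_n} APO).

Definition arch_step (st : {ffun 'I_n -> mstate M}) (x : {set API * 'I_n})
  : {ffun 'I_n -> mstate M} :=
  [ffun j : 'I_n => mdelta (st j) (rot x (- Posz (nat_of_ord j))%R)].

Definition arch_init : {ffun 'I_n -> mstate M} := [ffun _ => minit M].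

Definition arch_out (st : {ffun 'I_n -> mstate M}) : {set APO * 'I_n} :=
  [set x : APO * 'I_n | x.1 \in mlab (st x.2)].

Definition arch_tree (t : seq {set API * 'I_n}) : {set APO * 'I_n} :=
  arch_out (foldl arch_step arch_init t).
End Arch.

From Pilot Require Import Defs.
From mathcomp Require Import all_boot all_order all_algebra.
From mathcomp Require Import zify.
From Stdlib Require Import ClassicalEpsilon FunctionalExtensionality.

(* A tree produced by a finite-state machine has at most one subtree per state,
   so it is regular; conversely the finitely many subtrees of a regular tree are
   the states of a machine producing it.  In the architecture, process j reads
   the input rotated by -j, so its output on t is that of process 0 on the
   rotated input, and symmetry says the same of any tree.  Hence a symmetric
   regular tree is produced by n copies of the machine labelling each subtree
   with the process-0 component of its root, and every architecture tree is
   symmetric. *)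

Set Implicit Arguments. Unset Strict Implicit. Unset Printing Implicit Defensive.
Import GRing.Theory Num.Theory.

Section IndexRotation.
Variable n : nat.
Local Open Scope ring_scope.

Lemma rot_ord_subproof (a : int) (j : 'I_n) : (`|(j%:Z + a) %% n|%Z < n)%N.
Proof.
have n_gt0 : (0 < n)%N by apply: leq_ltn_trans (ltn_ord j).
have := @modz_ge0 (j%:Z + a) n; have := @ltz_pmod (j%:Z + a) n.
rewrite ltz_nat eqz_nat -lt0n n_gt0; lia.
Qed.

Definition rot_ord (a : int) (j : 'I_n) : 'I_n := Ordinal (rot_ord_subproof a j).

Lemma rot_ordE a j : (rot_ord a j)%:Z = ((j%:Z + a) %% n)%Z.
Proof.
have n_gt0 : (0 < n)%N by apply: leq_ltn_trans (ltn_ord j).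
by rewrite /= gez0_abs // modz_ge0 // eqz_nat -lt0n.
Qed.

Lemma rot_ord_add a b j : rot_ord b (rot_ord a j) = rot_ord (a + b) j.
Proof. by apply/val_inj/eqP; rewrite -eqz_nat !rot_ordE modzDml addrA. Qed.

Lemma rot_ord0 j : rot_ord 0 j = j.
Proof.
by apply/val_inj/eqP; rewrite -eqz_nat rot_ordE addr0 modz_small // ltz_nat ltn_ord.
Qed.

Lemma rot_ordK a : cancel (rot_ord a) (rot_ord (- a)).
Proof. by move=> j; rewrite rot_ord_add subrr rot_ord0. Qed.

Lemma rot_ordNK a : cancel (rot_ord (- a)) (rot_ord a).
Proof. by move=> j; rewrite rot_ord_add addNr rot_ord0. Qed.

Lemma rot_ord_eqmod a b j : (a = b %[mod n])%Z -> rot_ord a j = rot_ord b j.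
Proof.
by move=> eq_ab; apply/val_inj/eqP; rewrite -eqz_nat !rot_ordE -modzDmr eq_ab modzDmr.
Qed.

Section Signals.
Variable A : finType.
Implicit Types (u : {set A * 'I_n}) (t : seq {set A * 'I_n}).

Lemma mem_rot u a p j : ((p, j) \in Defs.rot u a) = ((p, rot_ord (- a) j) \in u).
Proof.
rewrite inE; apply/existsP/idP => [[[q k] /and3P[ku /eqP/= -> /eqP j_eq]] | uj].
  suff -> : j = rot_ord a k by rewrite rot_ordK.
  by apply/val_inj/eqP; rewrite -eqz_nat rot_ordE j_eq.
by exists (p, rot_ord (- a) j); rewrite uj eqxx -rot_ordE rot_ordNK eqxx.
Qed.

Lemma rot_add u a b : Defs.rot (Defs.rot u a) b = Defs.rot u (a + b).
Proof. by apply/setP => -[p j]; rewrite !mem_rot rot_ord_add opprD addrC. Qed.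

Lemma rot0 u : Defs.rot u 0 = u.
Proof. by apply/setP => -[p j]; rewrite mem_rot oppr0 rot_ord0. Qed.

Lemma rot_eqmod u a b : (a = b %[mod n])%Z -> Defs.rot u a = Defs.rot u b.
Proof.
move=> eq_ab; apply/setP => -[p j]; rewrite !mem_rot (@rot_ord_eqmod (- a) (- b)) //.
by rewrite -modzNm eq_ab modzNm.
Qed.

Lemma rotw_add t a b : rotw (rotw t a) b = rotw t (a + b).
Proof. by rewrite /rotw -map_comp; apply: eq_map => u; apply: rot_add. Qed.

Lemma rotw0 t : rotw t 0 = t.
Proof. by rewrite /rotw -[RHS]map_id; apply: eq_map => u; apply: rot0. Qed.

Lemma rotw_eqmod t a b : (a = b %[mod n])%Z -> rotw t a = rotw t b.
Proof. by move=> eq_ab; apply: eq_map => u; apply: rot_eqmod. Qed.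

End Signals.
End IndexRotation.

Definition run_tree (I O S : Type) (delta : S -> I -> S) (s0 : S) (out : S -> O)
    (t : seq I) : O :=
  out (foldl delta s0 t).

Lemma run_tree_regular (I O : Type) (S : finType) (delta : S -> I -> S) (s0 : S)
    (out : S -> O) :
  regular_tree (run_tree delta s0 out).
Proof.
exists #|S|, (fun k => run_tree delta (enum_val k) out) => th.
exists (enum_rank (foldl delta s0 th)); apply: functional_extensionality => t.
by rewrite enum_rankK /subtree /run_tree foldl_cat.
Qed.

Lemma regular_tree_run (I O : Type) (tau : seq I -> O) :
  regular_tree tau ->
  exists (S : finType) (delta : S -> I -> S) (s0 : S) (out : S -> O),
    tau = run_tree delta s0 out.
Proof.
move=> [m [f f_subtree]]; have [s0 f_s0] := f_subtree [::].
(* When f k is not a subtree of tau the chosen successor is arbitrary; such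
   states are unreachable. *)
pose delta k x := epsilon (inhabits s0) (fun k' => f k' = fun t => f k (x :: t)).
have delta_spec k x : (exists k', f k' = fun t => f k (x :: t)) ->
    f (delta k x) = fun t => f k (x :: t).
  exact: epsilon_spec.
have f_run th : f (foldl delta s0 th) = subtree tau th.
  elim/last_ind: th => [|th x IH]; first by [].
  have subtree_rcons : subtree tau (rcons th x) = fun t => subtree tau th (x :: t).
    by apply: functional_extensionality => t; rewrite /subtree cat_rcons.
  rewrite foldl_rcons subtree_rcons -IH; apply: delta_spec.
  by have [k f_k] := f_subtree (rcons th x); exists k; rewrite -f_k subtree_rcons IH.
exists 'I_m, delta, s0, (fun k => f k [::]).
by apply: functional_extensionality => t; rewrite /run_tree f_run /subtree cats0.
Qed.

Section SymmetricTrees.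
Variables (API APO : finType) (n : nat).
Local Open Scope ring_scope.

Lemma mem_symmetric_tree (hn : (0 < n)%N)
    (tau : seq {set API * 'I_n} -> {set APO * 'I_n}) :
  symmetric_tree tau -> forall t o (j : 'I_n),
  ((o, j) \in tau t) = ((o, Ordinal hn) \in tau (rotw t (- j%:Z))).
Proof.
move=> tau_sym t o j.
have rotw_back : rotw (rotw t (- j%:Z)) j = t by rewrite rotw_add addNr rotw0.
have rot_ord_back : rot_ord (- j%:Z) j = Ordinal hn.
  by apply/val_inj/eqP; rewrite -eqz_nat rot_ordE addrN mod0z.
by rewrite -{1}rotw_back tau_sym mem_rot rot_ord_back.
Qed.

Section Architecture.
Variable M : moore {set API * 'I_n} APO.

Lemma arch_state st t (j : 'I_n) :
  foldl (@arch_step _ _ _ M) st t j = foldl (@mdelta _ _ M) (st j) (rotw t (- j%:Z)).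
Proof. by elim: t st => [|x t IH] st //=; rewrite IH ffunE. Qed.

Lemma mem_arch_tree t o j :
  ((o, j) \in arch_tree M t)
  = (o \in mlab (foldl (@mdelta _ _ M) (minit M) (rotw t (- j%:Z)))).
Proof. by rewrite inE arch_state ffunE. Qed.

Lemma arch_tree_regular : regular_tree (arch_tree M).
Proof. exact: (run_tree_regular (@arch_step _ _ _ M) (arch_init M) (@arch_out _ _ _ M)). Qed.

Lemma arch_tree_symmetric : symmetric_tree (arch_tree M).
Proof.
move=> t i; apply/setP => -[o j]; rewrite mem_rot !mem_arch_tree rotw_add.
congr (o \in mlab (foldl _ _ _)); apply: rotw_eqmod.
by rewrite rot_ordE modzNm opprD opprK addrC.
Qed.

End Architecture.
End SymmetricTrees.

Theorem lemma5 (API APO : finType) (n : nat) (hn : 0 < n)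
  (tau : seq {set API * 'I_n} -> {set APO * 'I_n}) :
  (regular_tree tau /\ symmetric_tree tau) <->
  exists M : moore {set API * 'I_n} APO, tau = arch_tree M.
Proof.
split=> [[/regular_tree_run [S [delta [s0 [out ->]]]] run_sym] | [M ->]]; last first.
  by split; [apply: arch_tree_regular | apply: arch_tree_symmetric].
exists (Moore delta s0 (fun s => [set o | (o, Ordinal hn) \in out s])).
apply: functional_extensionality => t; apply/setP => -[o j].
by rewrite (mem_symmetric_tree hn run_sym) mem_arch_tree inE.
Qed.
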